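(* Let $N\ge 0$ and let $a_0,\dots,a_N\in\mathbb C$ with $|a_k|<1$ for $0\le k\le N-1$ and $|a_N|=1$. Let $\Phi_0,\dots,\Phi_{N+1}$ be the monic polynomials generated by the Szegő recurrence from $a_0,\dots,a_N$, let $z_1,\dots,z_{N+1}$ be the (simple, unimodular) zeros of $\Phi_{N+1}$, and let $w_1,\dots,w_{N+1}>0$, $\sum_s w_s=1$, be the weights of the unique probability measure $\sum_s w_s\delta_{z_s}$ with respect to which $\sum_{s}\Phi_n(z_s)\overline{\Phi_m(z_s)}w_s=h_n\delta_{nm}$ for $0\le m,n\le N$, where $h_n=\prod_{k=0}^{n-1}(1-|a_k|^2)$. Define the mirror-dual parameters $\tilde a_n=-a_N\,\overline{a_{N-n-1}}$ for $n=0,1,\dots,N$, with the convention $a_{-1}=-1$ (so $\tilde a_N=a_N$), and let $\tilde\Phi_0,\dots,\tilde\Phi_{N+1}$ be the monic polynomials generated by the Szegő recurrence from $\tilde a_0,\dots,\tilde a_N$. Then: (i) $|\tilde a_k|<1$ for $k<N$, $|\tilde a_N|=1$, and $\tilde\Phi_{N+1}=\Phi_{N+1}$; in particular $\tilde\Phi_0,\dots,\tilde\Phi_N$ are orthogonal with respect to a probability measure $\sum_s\tilde w_s\delta_{z_s}$ ($\tilde w_s>0$, $\sum_s\tilde w_s=1$) supported on the same points $z_1,\dots,z_{N+1}$; (ii) the weights satisfy $$\tilde w_s\,w_s=\frac{h_N}{|\Phi_{N+1}'(z_s)|^2},\qquad s=1,\dots,N+1 .$$ Conversely, if two systems of para-orthogonal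 polynomials (each generated by Verblunsky parameters $b_0,\dots,b_N$, resp. $\tilde b_0,\dots,\tilde b_N$, with moduli $<1$ except the last one of modulus $1$) have final polynomials with the same zero set $\{z_1,\dots,z_{N+1}\}$, and their orthogonality weights satisfy $\tilde w_s w_s=c/|\Phi_{N+1}'(z_s)|^2$ for all $s$ and some constant $c>0$, then $\tilde b_n=-b_N\overline{b_{N-n-1}}$ for $n=0,\dots,N$ (with $b_{-1}=-1$).
   Context: Szegő recurrence: given complex numbers $a_0,a_1,\dots$, set $\Phi_0(z)=1$ and $\Phi_{n+1}(z)=z\Phi_n(z)-\overline{a_n}\,\Phi_n^*(z)$, where $\Phi_n^*(z)=z^n\,\overline{\Phi_n}(1/z)$ and $\overline{\Phi_n}$ denotes the polynomial whose coefficients are the complex conjugates of those of $\Phi_n$. The $a_n$ are called Verblunsky parameters. When $|a_k|<1$ for $k<N$ and $|a_N|=1$, $\Phi_{N+1}$ has $N+1$ simple zeros on the unit circle and $\Phi_0,\dots,\Phi_N$ are orthogonal with respect to a unique probability measure supported on these zeros; such a finite system is called a system of para-orthogonal polynomials on the unit circle (POPUC). *)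

From HB Require Import structures.
From mathcomp Require Import all_boot all_order all_algebra.
Set Implicit Arguments. Unset Strict Implicit. Unset Printing Implicit Defensive.
Import Order.TTheory GRing.Theory Num.Theory.
Local Open Scope ring_scope.

(* Complex numbers are modelled by an arbitrary numClosedFieldType C
   (e.g. algC, or R[i] for a real closed R); conjugation is x^*. *)

(* Phi_n^*(z) = z^n * conj(Phi_n)(1/z): coefficient of z^i is conj(p_{n-i}). *)
Definition pstar (C : numClosedFieldType) (n : nat) (p : {poly C}) : {poly C} :=
  \poly_(i < n.+1) (p`_(n - i))^*.

Fixpoint Phi (C : numClosedFieldType) (a : nat -> C) (n : nat) : {poly C} :=
  match n with
  | 0 => 1
  | n'.+1 => 'X * Phi a n' - ((a n')^*)%:P * pstar n' (Phi a n')
  end.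

Definition hnorm (C : numClosedFieldType) (a : nat -> C) (n : nat) : C :=
  \prod_(k < n) (1 - `|a k| ^+ 2).

Definition popuc_params (C : numClosedFieldType) (N : nat) (a : nat -> C) : Prop :=
  (forall k, (k < N)%N -> `|a k| < 1) /\ `|a N| = 1.

Definition simple_zeros (C : numClosedFieldType) (N : nat) (p : {poly C})
  (z : 'I_N.+1 -> C) : Prop :=
  injective z /\ p = \prod_(s < N.+1) ('X - (z s)%:P).

Definition orth_weights (C : numClosedFieldType) (N : nat) (a : nat -> C)
  (z : 'I_N.+1 -> C) (w : 'I_N.+1 -> C) : Prop :=
  (forall s, 0 < w s) /\ \sum_(s < N.+1) w s = 1 /\
  (forall n m, (n <= N)%N -> (m <= N)%N ->
     \sum_(s < N.+1) (Phi a n).[z s] * ((Phi a m).[z s])^* * w s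
       = (if n == m then hnorm a n else 0)).

Definition mirror (C : numClosedFieldType) (N : nat) (a : nat -> C) (n : nat) : C :=
  - a N * (if (n < N)%N then a (N - n.+1)%N else -1)^*.

Arguments popuc_params {C} N a.
Arguments simple_zeros {C} N p z.
Arguments orth_weights {C} N a z w.
Arguments mirror {C} N a n.

From HB Require Import structures.
From mathcomp Require Import all_boot all_order all_algebra.
From mathcomp Require Import ring zify.
Import Order.TTheory GRing.Theory Num.Theory.
Local Open Scope ring_scope.
Set Implicit Arguments. Unset Strict Implicit. Unset Printing Implicit Defensive.

(* 1. Christoffel–Darboux.  The kernel K(x, y) = sum_k Phi_k(x) conj(Phi_k(y)) h_N/h_k
      satisfies (1 - x conj y) K(x, y)
        = Phi*_N(x) conj Phi*_N(y) - x conj y Phi_N(x) conj Phi_N(y);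
      at the nodes this shows |z_s| = 1, K(z_s, z_t) = 0 for s <> t, and the
      orthogonality measure is unique, given by the Christoffel numbers
      w_s = h_N / K(z_s, z_s).  Differentiating the identity in x at z_s gives
      K(z_s, z_s) = conj(Phi_N(z_s)) Phi_{N+1}'(z_s).
   2. Transfer matrices.  Writing the recurrence as a product of 2 x 2 polynomial
      matrices, the mirror parameters produce (up to diagonal factors) the
      transposed product.  Comparing entries yields Phi~_{N+1} = Phi_{N+1} and,
      via the determinant h_N X^N, the node identity
      z Phi_N(z) Phi~_N(z) = conj(a_N) z^N h_N, whence |Phi_N Phi~_N| = h_N at
      the nodes.  Together with 1. this is the product formula.
   3. Uniqueness.  A measure on N+1 points determines Phi_0, ..., Phi_N
      (the difference of two candidates is orthogonal to itself), hence the
      parameters; weights obeying the product formula up to a constant are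
      proportional, hence equal, to the mirror Christoffel numbers. *)

Lemma poly_eq0_on_nodes (R : idomainType) n (p : {poly R}) (z : 'I_n -> R) :
  injective z -> (size p <= n)%N -> (forall s, p.[z s] = 0) -> p = 0.
Proof.
move=> zI sp pz; apply: (@roots_geq_poly_eq0 _ _ [seq z s | s <- enum 'I_n]).
- by apply/allP => _ /mapP[s _ ->]; rewrite /root pz.
- by rewrite map_inj_uniq ?enum_uniq.
- by rewrite size_map size_enum_ord.
Qed.

(* In characteristic zero, polynomials are determined by their values
   (compare them on the points 0, 1, 2, ...). *)
Lemma poly_horner_ext (R : numDomainType) (p q : {poly R}) :
  (forall x, p.[x] = q.[x]) -> p = q.
Proof.
move=> pq; apply/eqP; rewrite -subr_eq0; apply/eqP.
apply: (@poly_eq0_on_nodes _ _ _ (fun i : 'I_(size (p - q)) => (i : nat)%:R)) => //.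
- by move=> i j /eqP; rewrite eqr_nat => /eqP /val_inj.
- by move=> i; rewrite hornerD hornerN pq subrr.
Qed.

Section ReversedPolynomial.
Variable C : numClosedFieldType.
Implicit Types (p q : {poly C}) (c : C).

Lemma coef_pstar n p i :
  (pstar n p)`_i = if (i < n.+1)%N then (p`_(n - i))^* else 0.
Proof. by rewrite coef_poly. Qed.

Lemma pstarXM n p : pstar n.+1 ('X * p) = pstar n p.
Proof.
apply/polyP => i; rewrite !coef_pstar coefXM.
have [ltin|leni] := ltnP i n.+1; first by rewrite ltnS ltnW // subSn.
rewrite ltnS leq_eqVlt; case: eqP => [->|_] /=; first by rewrite subnn rmorph0.
by rewrite ltnNge leni.
Qed.

Lemma pstarB_scale n p q c :
  pstar n (p - c%:P * q) = pstar n p - (c^*)%:P * pstar n q.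
Proof.
apply/polyP => i; rewrite coefB coefCM !coef_pstar coefB coefCM.
by case: ifP => _; rewrite ?mulr0 ?subr0 // rmorphB rmorphM.
Qed.

Lemma pstarK n p : (size p <= n.+1)%N -> pstar n.+1 (pstar n p) = 'X * p.
Proof.
move=> sp; apply/polyP => -[|i]; rewrite coef_pstar coefXM ?coef_pstar /=.
  by rewrite subn0 ltnn rmorph0.
rewrite !ltnS subSS; have [le_in|lt_ni] := leqP i n.
  by rewrite leq_subr subKn // conjCK.
by rewrite (leq_sizeP _ _ sp) // ltnW.
Qed.
End ReversedPolynomial.

Section SzegoRecurrence.
Variable C : numClosedFieldType.
Variable a : nat -> C.

Definition Phistar n := pstar n (Phi a n).

(* Partial norms h_N / h_k = prod_{k <= j < N} (1 - |a_j|^2). *)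
Definition htail k n := \prod_(k <= j < n) (1 - `|a j| ^+ 2).

Lemma size_Phi n : (size (Phi a n) <= n.+1)%N.
Proof.
elim: n => [|n IH] /=; first by rewrite size_poly1.
rewrite (leq_trans (size_polyD _ _)) // geq_max size_polyN.
rewrite (leq_trans (size_polyMleq _ _)) ?size_polyX //=.
rewrite (leq_trans (size_polyMleq _ _)) // size_polyC.
have := size_poly n.+1 (fun i => ((Phi a n)`_(n - i))^*); rewrite -/(pstar n _).
by case: (_ != 0) => /=; lia.
Qed.

Lemma lead_Phi n : (Phi a n)`_n = 1.
Proof.
elim: n => [|n IH] /=; first by rewrite coefC.
by rewrite coefB coefXM IH coefCM coef_pstar ltnn mulr0 subr0.
Qed.

Lemma Phi_rec n : Phi a n.+1 = 'X * Phi a n - ((a n)^*)%:P * Phistar n.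
Proof. by []. Qed.

Lemma horner_Phi0 x : (Phi a 0).[x] = 1.
Proof. exact: hornerC. Qed.

Lemma Phistar0 : Phistar 0 = 1.
Proof.
by apply/polyP => -[|i]; rewrite coef_pstar coefC /= ?coefC ?rmorph1.
Qed.

Lemma Phistar_rec n : Phistar n.+1 = Phistar n - (a n)%:P * ('X * Phi a n).
Proof.
by rewrite /Phistar Phi_rec pstarB_scale pstarXM pstarK ?size_Phi // conjCK.
Qed.

Lemma horner_Phi_rec n x :
  (Phi a n.+1).[x] = x * (Phi a n).[x] - (a n)^* * (Phistar n).[x].
Proof. by rewrite Phi_rec !hornerE mulrC. Qed.

Lemma horner_Phistar_rec n x :
  (Phistar n.+1).[x] = (Phistar n).[x] - a n * x * (Phi a n).[x].
Proof. by rewrite Phistar_rec !hornerE. Qed.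

(* Phi_{n+1}(0) = - conj(a_n): the parameters are read off the polynomials. *)
Lemma coef0_Phi n : (Phi a n.+1)`_0 = - (a n)^*.
Proof.
rewrite Phi_rec coefB coefXM coefCM.
by rewrite coef_pstar subn0 lead_Phi rmorph1 mulr1 sub0r.
Qed.

Lemma htail_recr k n : (k <= n)%N -> htail k n.+1 = htail k n * (1 - `|a n| ^+ 2).
Proof. by move=> kn; rewrite /htail big_nat_recr. Qed.

Lemma htail0 n : htail 0 n = hnorm a n.
Proof. by rewrite /htail /hnorm big_mkord. Qed.

Lemma hnorm_htail n m : (n <= m)%N -> hnorm a n * htail n m = hnorm a m.
Proof. by move=> nm; rewrite -!htail0 /htail -big_cat_nat. Qed.

Lemma htailnn n : htail n n = 1.
Proof. by rewrite /htail big_geq. Qed.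

Lemma christoffel_darboux n x y :
  (Phistar n).[x] * ((Phistar n).[y])^* - x * y^* * (Phi a n).[x] * ((Phi a n).[y])^*
  = (1 - x * y^*) * \sum_(k < n.+1) (Phi a k).[x] * ((Phi a k).[y])^* * htail k n.
Proof.
elim: n => [|n IH].
  by rewrite big_ord1 Phistar0 /= !hornerC htailnn !rmorph1 !mulr1.
rewrite big_ord_recr /= htailnn mulr1.
rewrite (eq_bigr (fun k : 'I_n.+1 =>
    (Phi a k).[x] * ((Phi a k).[y])^* * htail k n * (1 - `|a n| ^+ 2))); last first.
  by move=> k _; rewrite htail_recr ?mulrA // -ltnS.
rewrite -mulr_suml mulrDr mulrA (mulrC _ (1 - _)) -mulrA -IH.
rewrite !horner_Phi_rec !horner_Phistar_rec normCK !rmorphB !rmorphM /= !conjCK.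
ring.
Qed.
End SzegoRecurrence.

Section Nodes.
Variables (C : numClosedFieldType) (N : nat) (a : nat -> C) (z : 'I_N.+1 -> C).
Hypothesis pa : popuc_params N a.
Hypothesis sz : simple_zeros N (Phi a N.+1) z.

Lemma aN_unit : a N * (a N)^* = 1.
Proof. by rewrite -normCK (proj2 pa) expr1n. Qed.

Lemma htail_gt0 k : 0 < htail a k N.
Proof.
rewrite /htail big_nat_cond; apply: prodr_gt0 => j /andP[/andP[_ jN] _].
by rewrite subr_gt0 exprn_ilt1 ?normr_ge0 ?(proj1 pa).
Qed.

Lemma hnorm_gt0 : 0 < hnorm a N.
Proof. by rewrite -htail0 htail_gt0. Qed.

Lemma Phi_node s : (Phi a N.+1).[z s] = 0.
Proof. by rewrite (proj2 sz) horner_prod (bigD1 s) //= hornerXsubC subrr mul0r. Qed.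

(* At a node, Phi_{N+1}(z) = 0 reads Phi_N^*(z) = a_N z Phi_N(z). *)
Lemma Phistar_node s : (Phistar a N).[z s] = a N * z s * (Phi a N).[z s].
Proof.
have /eqP := Phi_node s; rewrite horner_Phi_rec subr_eq0 -mulrA => /eqP ->.
by rewrite mulrA aN_unit mul1r.
Qed.

Definition kern s t :=
  \sum_(k < N.+1) (Phi a k).[z s] * ((Phi a k).[z t])^* * htail a k N.

(* By Christoffel–Darboux and the node relation,
   (1 - z_s conj(z_t)) K(z_s, z_t) = 0. *)
Lemma kern_annihilated s t : (1 - z s * (z t)^*) * kern s t = 0.
Proof.
rewrite /kern -christoffel_darboux !Phistar_node !rmorphM /=.
transitivity ((a N * (a N)^* - 1) *
  (z s * (z t)^* * (Phi a N).[z s] * ((Phi a N).[z t])^*)); first ring.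
by rewrite aN_unit subrr mul0r.
Qed.

(* On the diagonal the kernel is at least its k = 0 term h_N > 0. *)
Lemma kern_gt0 s : 0 < kern s s.
Proof.
rewrite /kern big_ord_recl /= hornerC rmorph1 !mul1r ltr_wpDr ?htail_gt0 //.
by apply: sumr_ge0 => k _; rewrite mulr_ge0 ?mul_conjC_ge0 ?ltW ?htail_gt0.
Qed.

Lemma node_unimodular s : z s * (z s)^* = 1.
Proof.
have /eqP := kern_annihilated s s.
by rewrite mulf_eq0 (gt_eqF (kern_gt0 s)) orbF subr_eq0 => /eqP.
Qed.

Lemma norm_node s : `|z s| = 1.
Proof.
by apply/eqP; rewrite -(@pexpr_eq1 _ _ 2) // normCK node_unimodular.
Qed.

Lemma kern_offdiag s t : s != t -> kern s t = 0.
Proof.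
move=> st; have /eqP := kern_annihilated s t; rewrite mulf_eq0 => /orP[|/eqP //].
rewrite subr_eq0 => /eqP zst; suff zts : z t = z s by rewrite (proj1 sz _ _ zts) eqxx in st.
by rewrite -[z t]mul1r zst -mulrA (mulrC _ (z t)) node_unimodular mulr1.
Qed.

Definition kern_poly s : {poly C} :=
  \sum_(k < N.+1) Phi a k * (((Phi a k).[z s])^* * htail a k N)%:P.

Lemma horner_kern_poly s x : (kern_poly s).[x]
  = \sum_(k < N.+1) (Phi a k).[x] * ((Phi a k).[z s])^* * htail a k N.
Proof. by rewrite horner_sum; apply: eq_bigr => k _; rewrite hornerM hornerC mulrA. Qed.

Lemma kern_poly_CD s : (1 - ((z s)^*)%:P * 'X) * kern_poly s
  = (- (z s)^* * ((Phi a N).[z s])^*)%:P * Phi a N.+1.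
Proof.
apply: poly_horner_ext => x.
have e : (1 - ((z s)^*)%:P * 'X).[x] = 1 - x * (z s)^* by rewrite !hornerE mulrC.
rewrite !hornerM e hornerC horner_kern_poly -christoffel_darboux.
rewrite horner_Phi_rec Phistar_node !rmorphM /=; ring.
Qed.

(* Differentiating at x = z_s: K(z_s, z_s) = conj(Phi_N(z_s)) Phi_{N+1}'(z_s). *)
Lemma kern_diag_deriv s :
  kern s s = ((Phi a N).[z s])^* * ((Phi a N.+1)^`()).[z s].
Proof.
have := congr1 (fun p => (p^`()).[z s]) (kern_poly_CD s); cbv beta.
rewrite derivM deriv_mulC derivB derivC deriv_mulC derivX sub0r mulr1.
rewrite hornerD !hornerM !hornerN !hornerC horner_kern_poly -/(kern s s) !hornerE.
rewrite [(z s)^* * z s]mulrC node_unimodular subrr mul0r addr0.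
have nz : - (z s)^* != 0 by rewrite oppr_eq0 conjC_eq0 -normr_eq0 norm_node oner_eq0.
by move=> e; apply: (mulfI nz); rewrite e mulrA.
Qed.
End Nodes.

Section ChristoffelWeights.
Variables (C : numClosedFieldType) (N : nat) (a : nat -> C) (z : 'I_N.+1 -> C).
Hypothesis pa : popuc_params N a.
Hypothesis sz : simple_zeros N (Phi a N.+1) z.

Definition christoffel s := hnorm a N / kern a z s s.

(* Pairing the kernel with any orthogonality measure isolates its k = 0 term. *)
Lemma orth_weights_kern w t : orth_weights N a z w ->
  \sum_(s < N.+1) w s * kern a z s t = hnorm a N.
Proof.
move=> [_ [_ orth]].
transitivity (\sum_(k < N.+1)
    (\sum_(s < N.+1) (Phi a k).[z s] * ((Phi a 0).[z s])^* * w s)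
      * (((Phi a k).[z t])^* * htail a k N)).
  rewrite /kern; under eq_bigr do rewrite mulr_sumr.
  rewrite exchange_big; apply: eq_bigr => k _; rewrite mulr_suml.
  by apply: eq_bigr => s _; rewrite horner_Phi0 rmorph1; ring.
rewrite big_ord_recl [X in _ + X]big1 ?addr0 => [|k _]; last first.
  by rewrite lift0 orth // mul0r.
by rewrite orth // eqxx horner_Phi0 rmorph1 /hnorm big_ord0 !mul1r htail0.
Qed.

Lemma orth_weightsE w : orth_weights N a z w -> forall t, w t = christoffel t.
Proof.
move=> ow t; rewrite /christoffel -(orth_weights_kern t ow).
rewrite (bigD1 t) //= big1 ?addr0 ?mulfK ?(gt_eqF (kern_gt0 z pa t)) // => s st.
by rewrite (kern_offdiag pa sz st) mulr0.
Qed.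

(* Dual orthogonality: the matrix (Phi_k(z_s))_{k,s} has the inverse
   (conj(Phi_k(z_s)) h_N / (h_k K(z_s,z_s)))_{s,k}, by diagonality of the kernel. *)
Lemma kern_dual (n m : 'I_N.+1) :
  \sum_(s < N.+1) (Phi a n).[z s] * ((Phi a m).[z s])^* * htail a m N / kern a z s s
    = (n == m)%:R.
Proof.
pose A : 'M[C]_N.+1 := \matrix_(k, s) (Phi a k).[z s].
pose B : 'M[C]_N.+1 :=
  \matrix_(s, k) (((Phi a k).[z s])^* * htail a k N / kern a z s s).
have BA : B *m A = 1%:M.
  apply/matrixP => s t; rewrite !mxE.
  transitivity (kern a z t s / kern a z s s).
    by rewrite /kern mulr_suml; apply: eq_bigr => k _; rewrite !mxE; ring.
  have [<-|st] := eqVneq s t; first by rewrite divff ?(gt_eqF (kern_gt0 z pa s)).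
  by rewrite kern_offdiag // ?mul0r // eq_sym.
have /matrixP/(_ n m) := mulmx1C BA; rewrite !mxE => <-.
by apply: eq_bigr => s _; rewrite !mxE !mulrA.
Qed.

(* Multiplying the dual relations by h_m (note h_m (h_N / h_m) = h_N): the
   Christoffel numbers make Phi_0, ..., Phi_N orthogonal with norms h_n. *)
Lemma christoffel_orth n m : (n <= N)%N -> (m <= N)%N ->
  \sum_(s < N.+1) (Phi a n).[z s] * ((Phi a m).[z s])^* * christoffel s
    = (if n == m then hnorm a n else 0).
Proof.
move=> nN mN; rewrite -ltnS in nN; rewrite -ltnS in mN.
transitivity (hnorm a m * \sum_(s < N.+1)
    (Phi a (Ordinal nN)).[z s] * ((Phi a (Ordinal mN)).[z s])^*
      * htail a (Ordinal mN) N / kern a z s s).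
  rewrite mulr_sumr; apply: eq_bigr => s _.
  by rewrite /christoffel /= -(hnorm_htail a (_ : m <= N)%N) //; ring.
rewrite kern_dual -(inj_eq val_inj) /=.
by case: eqVneq => [->|_]; rewrite ?mulr1 ?mulr0.
Qed.

Lemma christoffel_orth_weights : orth_weights N a z christoffel.
Proof.
split; first by move=> s; rewrite divr_gt0 ?(hnorm_gt0 pa) ?(kern_gt0 z pa).
split; last exact: christoffel_orth.
have := christoffel_orth (leq0n N) (leq0n N); rewrite eqxx /hnorm big_ord0 => <-.
by apply: eq_bigr => s _; rewrite horner_Phi0 rmorph1 !mul1r.
Qed.
End ChristoffelWeights.

Section TransferMatrices.
Variable C : numClosedFieldType.
Local Notation P := {poly C}.

Record mat2 := Mat2 { m11 : P; m12 : P; m21 : P; m22 : P }.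

Definition mul2 (m n : mat2) :=
  Mat2 (m11 m * m11 n + m12 m * m21 n) (m11 m * m12 n + m12 m * m22 n)
       (m21 m * m11 n + m22 m * m21 n) (m21 m * m12 n + m22 m * m22 n).
Definition one2 := Mat2 1 0 0 1.
Definition tr2 (m : mat2) := Mat2 (m11 m) (m21 m) (m12 m) (m22 m).
Definition det2 (m : mat2) := m11 m * m22 m - m12 m * m21 m.
Definition diag2 (p q : P) := Mat2 p 0 0 q.

Lemma mul2A m n p : mul2 m (mul2 n p) = mul2 (mul2 m n) p.
Proof. by case: m n p => [? ? ? ?] [? ? ? ?] [? ? ? ?]; rewrite /mul2 /=; congr Mat2; ring. Qed.

Lemma mul2_1 m : mul2 m one2 = m.
Proof. by case: m => ? ? ? ?; rewrite /mul2 /=; congr Mat2; ring. Qed.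

Lemma mul1_2 m : mul2 one2 m = m.
Proof. by case: m => ? ? ? ?; rewrite /mul2 /=; congr Mat2; ring. Qed.

Lemma tr2_mul m n : tr2 (mul2 m n) = mul2 (tr2 n) (tr2 m).
Proof. by case: m n => [? ? ? ?] [? ? ? ?]; rewrite /mul2 /tr2 /=; congr Mat2; ring. Qed.

Lemma det2_mul m n : det2 (mul2 m n) = det2 m * det2 n.
Proof. by case: m n => [? ? ? ?] [? ? ? ?]; rewrite /mul2 /det2 /=; ring. Qed.

(* One step of the Szegő recurrence:
   column (Phi_{n+1}, Phistar_{n+1}) = step a_n * column (Phi_n, Phistar_n). *)
Definition step (c : C) := Mat2 'X (- (c^*)%:P) (- (c%:P * 'X)) 1.

Fixpoint transfer (c : nat -> C) n :=
  if n is n'.+1 then mul2 (step (c n')) (transfer c n') else one2.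

Lemma transfer_rows c n :
  m11 (transfer c n) + m12 (transfer c n) = Phi c n /\
  m21 (transfer c n) + m22 (transfer c n) = Phistar c n.
Proof.
elim: n => [|n [IH1 IH2]]; first by rewrite /= Phistar0 addr0 add0r.
by rewrite Phi_rec Phistar_rec -IH1 -IH2 /=; split; ring.
Qed.

Lemma eq_transfer c c' n :
  (forall j, (j < n)%N -> c j = c' j) -> transfer c n = transfer c' n.
Proof.
elim: n => [//|n IH] cc' /=.
by rewrite cc' // IH // => j jn; apply/cc'/ltnW.
Qed.

Lemma transfer_recl c n :
  transfer c n.+1 = mul2 (transfer (fun j => c j.+1) n) (step (c 0%N)).
Proof.
elim: n c => [|n IH] c; first by rewrite /= mul2_1 mul1_2.
have -> : transfer c n.+2 = mul2 (step (c n.+1)) (transfer c n.+1) by [].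
by rewrite IH mul2A.
Qed.

(* Transposition reverses the order of the steps and conjugates the parameters. *)
Lemma step_tr c : mul2 (diag2 1 'X) (tr2 (step c)) = mul2 (step (c^*)) (diag2 1 'X).
Proof. by rewrite /mul2 /= conjCK; congr Mat2; ring. Qed.

Lemma transfer_tr c n : mul2 (diag2 1 'X) (tr2 (transfer c n))
  = mul2 (transfer (fun j => (c (n.-1 - j)%N)^*) n) (diag2 1 'X).
Proof.
elim: n => [|n IH]; first by rewrite /= mul2_1 mul1_2.
rewrite [transfer c _]/= tr2_mul mul2A IH -mul2A step_tr mul2A transfer_recl subn0.
congr (mul2 (mul2 _ _) _); apply: eq_transfer => j jn.
by congr (_^*); congr c; lia.
Qed.

Lemma step_rot mu c : mu * mu^* = 1 ->
  mul2 (diag2 mu%:P 1) (step (mu * c)) = mul2 (step c) (diag2 mu%:P 1).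
Proof.
move=> mu1; have mu1P : mu%:P * (mu^*)%:P = 1 :> P by rewrite -polyCM mu1.
rewrite /mul2 /= !rmorphM; congr Mat2; try ring.
by rewrite mul0r mulr0 !mulr1 addr0 add0r mulrN mulrA mu1P mul1r.
Qed.

Lemma transfer_rot mu c n : mu * mu^* = 1 ->
  mul2 (diag2 mu%:P 1) (transfer (fun j => mu * c j) n)
  = mul2 (transfer c n) (diag2 mu%:P 1).
Proof.
move=> mu1; elim: n => [|n IH]; first by rewrite /= mul2_1 mul1_2.
by rewrite [transfer _ n.+1]/= [transfer c n.+1]/= mul2A step_rot // -!mul2A IH.
Qed.

Lemma det2_step c : det2 (step c) = (1 - `|c| ^+ 2)%:P * 'X.
Proof. by rewrite /det2 /= normCK polyCB polyCM; ring. Qed.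

Lemma det2_transfer c n : det2 (transfer c n) = (hnorm c n)%:P * 'X ^+ n.
Proof.
elim: n => [|n IH]; first by rewrite /det2 /hnorm big_ord0 /=; ring.
rewrite [transfer c _]/= det2_mul IH det2_step /hnorm big_ord_recr /= polyCM.
by rewrite (exprS ('X : P) n); ring.
Qed.
End TransferMatrices.

Section Mirror.
Variables (C : numClosedFieldType) (N : nat) (a : nat -> C).
Hypothesis pa : popuc_params N a.
Local Notation am := (mirror N a).

Lemma mirror_N : am N = a N.
Proof. by rewrite /mirror ltnn rmorphN rmorph1 mulrNN mulr1. Qed.

Lemma mirror_lt j : (j < N)%N -> am j = - a N * (a (N.-1 - j)%N)^*.
Proof. by move=> jN; rewrite /mirror jN; congr (_ * (a _)^*); lia. Qed.

Lemma norm_mirror j : (j < N)%N -> `|am j| = `|a (N.-1 - j)%N|.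
Proof. by move=> jN; rewrite mirror_lt // normrM normrN (proj2 pa) mul1r norm_conjC. Qed.

Lemma mirror_popuc : popuc_params N am.
Proof.
split=> [k kN|]; last by rewrite mirror_N (proj2 pa).
by rewrite norm_mirror // (proj1 pa) //; lia.
Qed.

(* ... with the same total norm h_N (the moduli are merely reversed). *)
Lemma mirror_hnorm : hnorm am N = hnorm a N.
Proof.
rewrite /hnorm (reindex_inj rev_ord_inj) /=; apply: eq_bigr => k _.
have kN := ltn_ord k; rewrite norm_mirror /=; last by lia.
by congr (1 - `|a _| ^+ 2); lia.
Qed.

Lemma mirror_transfer :
  mul2 (mul2 (diag2 (- a N)%:P 1) (transfer am N)) (diag2 1 'X)
  = mul2 (mul2 (diag2 1 'X) (tr2 (transfer a N))) (diag2 (- a N)%:P 1).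
Proof.
have -> : transfer am N = transfer (fun j => - a N * (a (N.-1 - j)%N)^*) N.
  by apply: eq_transfer => j; apply: mirror_lt.
rewrite transfer_rot; last by rewrite rmorphN mulrNN -normCK (proj2 pa) expr1n.
have RE : mul2 (diag2 (- a N)%:P 1) (diag2 1 'X) = mul2 (diag2 1 'X) (diag2 (- a N)%:P 1).
  by rewrite /mul2 /=; congr Mat2; ring.
by rewrite -mul2A RE mul2A transfer_tr.
Qed.

Lemma mirror_entries :
  [/\ m11 (transfer am N) = m11 (transfer a N),
      m22 (transfer am N) = m22 (transfer a N),
      'X * m12 (transfer am N) = - ((a N)^*)%:P * m21 (transfer a N)
    & ((a N)^*)%:P * m21 (transfer am N) = - ('X * m12 (transfer a N))].
Proof.
have aN0 : (- a N)%:P != 0 :> {poly C}.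
  by rewrite polyC_eq0 oppr_eq0 -normr_eq0 (proj2 pa) oner_eq0.
have unitP : ((a N)^*)%:P * (- a N)%:P = -1 :> {poly C}.
  by rewrite -polyCM mulrN mulrC -normCK (proj2 pa) expr1n rmorphN1.
move: mirror_transfer; case: (transfer a N) => w11 w12 w21 w22.
case: (transfer am N) => t11 t12 t21 t22; rewrite /mul2 /= => -[k1 k2 k3 k4].
rewrite !(mul0r, mulr0, addr0, add0r, mulr1, mul1r) in k1 k2 k3 k4.
have X0 : 'X != 0 :> {poly C} by rewrite polyX_eq0.
split.
- by apply: (mulfI aN0); rewrite k1 mulrC.
- by apply: (mulfI X0); rewrite mulrC k4.
- transitivity (- (((a N)^*)%:P * (- a N)%:P) * ('X * t12)).
    by rewrite unitP opprK mul1r.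
  by rewrite -k2; ring.
- transitivity (((a N)^*)%:P * (- a N)%:P * ('X * w12)).
    by rewrite k3; ring.
  by rewrite unitP mulN1r.
Qed.

Lemma Phi_mirror : Phi am N.+1 = Phi a N.+1.
Proof.
have [wP wPs] := transfer_rows a N; have [tP tPs] := transfer_rows am N.
have [e11 e22 e12 e21] := mirror_entries.
rewrite !Phi_rec mirror_N -wP -wPs -tP -tPs e11 e22 !mulrDr e12 e21.
ring.
Qed.

(* At a zero x of Phi_{N+1}:  x Phi_N(x) Phi~_N(x) = conj(a_N) x^N h_N,
   combining the node relation, det T_N = h_N X^N and the entry relations. *)
Lemma node_mirror x : (Phi a N.+1).[x] = 0 ->
  x * (Phi a N).[x] * (Phi am N).[x] = (a N)^* * x ^+ N * hnorm a N.
Proof.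
rewrite horner_Phi_rec => /eqP; rewrite subr_eq0 => /eqP node.
have [wP wPs] := transfer_rows a N; have [tP _] := transfer_rows am N.
have [e11 _ e12 _] := mirror_entries.
have det := congr1 (horner^~ x) (det2_transfer a N).
have e12x := congr1 (horner^~ x) e12.
move: node det e12x; rewrite -tP -wP -wPs e11 /det2 /=.
case: (transfer a N) => w11 w12 w21 w22 /=; set t12 := m12 _.
rewrite !hornerE => node det e12x.
rewrite -[RHS]mulrA [x ^+ N * _]mulrC -det.
transitivity (w11.[x] * (x * (w11.[x] + w12.[x])) + (w11.[x] + w12.[x]) * (x * t12.[x])).
  by ring.
by rewrite node e12x; ring.
Qed.
End Mirror.

Section ProductFormula.
Variables (C : numClosedFieldType) (N : nat) (a : nat -> C) (z : 'I_N.+1 -> C).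
Hypothesis pa : popuc_params N a.
Hypothesis sz : simple_zeros N (Phi a N.+1) z.
Local Notation am := (mirror N a).

Lemma mirror_simple_zeros : simple_zeros N (Phi am N.+1) z.
Proof. by rewrite Phi_mirror. Qed.

(* K(z_s, z_s) K~(z_s, z_s) = h_N |Phi_{N+1}'(z_s)|^2: both kernels are
   conj(Phi_N(z_s)) Phi_{N+1}'(z_s) resp. its mirror analogue, and
   |Phi_N(z_s)| |Phi~_N(z_s)| = h_N by node_mirror on the unit circle. *)
Lemma kern_mirror_kern s : kern a z s s * kern am z s s
  = hnorm a N * `|((Phi a N.+1)^`()).[z s]| ^+ 2.
Proof.
have pam := mirror_popuc pa.
have K0 : 0 <= kern a z s s * kern am z s s by rewrite mulr_ge0 ?ltW ?kern_gt0.
have nPhi : `|(Phi a N).[z s]| * `|(Phi am N).[z s]| = hnorm a N.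
  have /(congr1 Num.norm) := node_mirror pa (Phi_node sz s).
  rewrite !normrM normrX norm_conjC (proj2 pa) (norm_node pa sz) expr1n !mul1r.
  by move=> ->; rewrite ger0_norm // ltW ?hnorm_gt0.
rewrite -(ger0_norm K0) (kern_diag_deriv pa sz) (kern_diag_deriv pam mirror_simple_zeros).
by rewrite (Phi_mirror pa) !normrM !norm_conjC -nPhi; ring.
Qed.

Lemma product_formula w wt : orth_weights N a z w -> orth_weights N am z wt ->
  forall s, wt s * w s = hnorm a N / `|((Phi a N.+1)^`()).[z s]| ^+ 2.
Proof.
move=> ow owt s; have pam := mirror_popuc pa.
rewrite (orth_weightsE pa sz ow) (orth_weightsE pam mirror_simple_zeros owt).
have h0 : hnorm a N != 0 by rewrite gt_eqF ?hnorm_gt0.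
have D2 : `|((Phi a N.+1)^`()).[z s]| ^+ 2 = kern a z s s * kern am z s s / hnorm a N.
  by rewrite kern_mirror_kern mulrAC mulfV ?mul1r.
rewrite /christoffel mirror_hnorm // D2; field.
by rewrite h0 !gt_eqF ?kern_gt0.
Qed.
End ProductFormula.

Section Uniqueness.
Variables (C : numClosedFieldType) (N : nat) (z : 'I_N.+1 -> C) (w : 'I_N.+1 -> C).

Lemma orth_lower_degree a : orth_weights N a z w ->
  forall k (q : {poly C}), (k <= N)%N -> (size q <= k)%N ->
  \sum_(s < N.+1) (Phi a k).[z s] * (q.[z s])^* * w s = 0.
Proof.
move=> [_ [_ orth]] k + kN.
suff IH j (q : {poly C}) : (j <= k)%N -> (size q <= j)%N ->
  \sum_(s < N.+1) (Phi a k).[z s] * (q.[z s])^* * w s = 0 by move=> q; apply: IH.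
elim: j q => [|j IH] q jk sq.
  move: sq; rewrite leqn0 size_poly_eq0 => /eqP ->.
  by apply: big1 => s _; rewrite horner0 rmorph0 mulr0 mul0r.
(* Split q = r + q_j Phi_j with deg r < j. *)
pose r := q - (q`_j)%:P * Phi a j.
have sr : (size r <= j)%N.
  apply/leq_sizeP => i ji; rewrite /r coefB coefCM.
  have [->|ij] := eqVneq i j; first by rewrite lead_Phi mulr1 subrr.
  have lt_ji : (j < i)%N by rewrite ltn_neqAle eq_sym ij.
  rewrite [q`_i](leq_sizeP _ _ sq) // (leq_sizeP _ _ (size_Phi a j)) //.
  by rewrite mulr0 subrr.
have -> : q = r + (q`_j)%:P * Phi a j by rewrite subrK.
transitivity (\sum_(s < N.+1) (Phi a k).[z s] * (r.[z s])^* * w s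
  + (q`_j)^* * \sum_(s < N.+1) (Phi a k).[z s] * ((Phi a j).[z s])^* * w s).
  rewrite mulr_sumr -big_split /=; apply: eq_bigr => s _.
  by rewrite hornerD hornerM hornerC rmorphD rmorphM /=; ring.
rewrite (IH r (ltnW jk) sr) (orth k j kN (leq_trans (ltnW jk) kN)).
by rewrite (gtn_eqF jk) mulr0 addr0.
Qed.

Lemma weighted_norm_eq0 (f : 'I_N.+1 -> C) : (forall s, 0 < w s) ->
  \sum_(s < N.+1) f s * (f s)^* * w s = 0 -> forall s, f s = 0.
Proof.
move=> wpos S0 s.
have ge0 t : 0 <= f t * (f t)^* * w t by rewrite mulr_ge0 ?mul_conjC_ge0 ?ltW.
have /eqP := psumr_eq0P (fun t _ => ge0 t) S0 (i := s) isT.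
by rewrite !mulf_eq0 (gt_eqF (wpos s)) conjC_eq0 orbF orbb => /eqP.
Qed.

Lemma size_Phi_sub (a1 a2 : nat -> C) k : (size (Phi a1 k - Phi a2 k)%R <= k)%N.
Proof.
apply/leq_sizeP => i ki; rewrite coefB.
have [->|ik] := eqVneq i k; first by rewrite !lead_Phi subrr.
have lt_ki : (k < i)%N by rewrite ltn_neqAle eq_sym ik.
rewrite [(Phi a1 k)`_i](leq_sizeP _ _ (size_Phi _ k)) //.
by rewrite (leq_sizeP _ _ (size_Phi _ k)) // subrr.
Qed.

(* The orthogonality measure on the nodes determines Phi_0, ..., Phi_N:
   their difference is orthogonal to itself, so it vanishes at the N+1 nodes. *)
Lemma orth_weights_Phi a1 a2 : injective z ->
  orth_weights N a1 z w -> orth_weights N a2 z w ->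
  forall k, (k <= N)%N -> Phi a1 k = Phi a2 k.
Proof.
move=> zI ow1 ow2 k kN; apply/eqP; rewrite -subr_eq0; apply/eqP.
set D := Phi a1 k - Phi a2 k.
apply: (poly_eq0_on_nodes zI); first exact: leq_trans (size_Phi_sub a1 a2 k) (leqW kN).
apply: (weighted_norm_eq0 (f := fun s => D.[z s]) (proj1 ow1)).
transitivity (\sum_(s < N.+1) (Phi a1 k).[z s] * (D.[z s])^* * w s
            - \sum_(s < N.+1) (Phi a2 k).[z s] * (D.[z s])^* * w s).
  by rewrite -sumrB; apply: eq_bigr => s _; rewrite hornerD hornerN; ring.
by rewrite !orth_lower_degree ?size_Phi_sub ?subrr.
Qed.

(* ... and hence the Verblunsky parameters a_0, ..., a_N (a_n = - conj(Phi_{n+1}(0))). *)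
Lemma orth_weights_params a1 a2 :
  simple_zeros N (Phi a1 N.+1) z -> simple_zeros N (Phi a2 N.+1) z ->
  orth_weights N a1 z w -> orth_weights N a2 z w ->
  forall n, (n <= N)%N -> a1 n = a2 n.
Proof.
move=> sz1 sz2 ow1 ow2 n nN.
have PhiE : Phi a1 n.+1 = Phi a2 n.+1.
  have [ltnN|leNn] := ltnP n N; first exact: (orth_weights_Phi (proj1 sz1) ow1 ow2 ltnN).
  have -> : n = N by apply/eqP; rewrite eqn_leq nN leNn.
  by rewrite (proj2 sz1) (proj2 sz2).
have := coef0_Phi a1 n; rewrite PhiE coef0_Phi.
by move=> /oppr_inj /(can_inj (@conjCK _)).
Qed.

Lemma orth_weights_eq a w' : (forall s, w s = w' s) ->
  orth_weights N a z w -> orth_weights N a z w'.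
Proof.
move=> ww' [wpos [wsum orth]]; split=> [s|]; first by rewrite -ww'.
split=> [|n m nN mN]; first by rewrite -wsum; apply: eq_bigr => s _; rewrite ww'.
by rewrite -orth //; apply: eq_bigr => s _; rewrite ww'.
Qed.
End Uniqueness.

Lemma prob_proportional (R : fieldType) n (u v : 'I_n -> R) k :
  (forall s, u s = k * v s) -> \sum_(s < n) u s = 1 -> \sum_(s < n) v s = 1 ->
  forall s, u s = v s.
Proof.
move=> uv su sv s; suff k1 : k = 1 by rewrite uv k1 mul1r.
have : \sum_(s < n) u s = k * \sum_(s < n) v s.
  by rewrite mulr_sumr; apply: eq_bigr => t _; rewrite uv.
by rewrite su sv mulr1.
Qed.

(* The constant is forced to be h_N since both weight vectors sum to 1. *)
Lemma mirror_converse (C : numClosedFieldType) (N : nat) (b bt : nat -> C)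
    (z w wt : 'I_N.+1 -> C) (c : C) :
  popuc_params N b ->
  simple_zeros N (Phi b N.+1) z -> simple_zeros N (Phi bt N.+1) z ->
  orth_weights N b z w -> orth_weights N bt z wt ->
  (forall s, wt s * w s = c / `|((Phi b N.+1)^`()).[z s]| ^+ 2) ->
  forall n, (n <= N)%N -> bt n = mirror N b n.
Proof.
move=> pb szb szbt ow owt wtw.
have szm := mirror_simple_zeros pb szb.
have om := christoffel_orth_weights (mirror_popuc pb) szm.
have h0 : hnorm b N != 0 by rewrite gt_eqF ?hnorm_gt0.
have wt_prop s : wt s = c / hnorm b N * christoffel (mirror N b) z s.
  have ws : w s != 0 by rewrite gt_eqF ?(proj1 ow).
  apply: (mulIf ws).
  by rewrite wtw -[RHS]mulrA (product_formula pb szb ow om) mulrA divfK.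
have wt_eq := prob_proportional wt_prop (proj1 (proj2 owt)) (proj1 (proj2 om)).
have owm : orth_weights N (mirror N b) z wt by apply: orth_weights_eq om => s; rewrite wt_eq.
exact: (orth_weights_params szbt szm owt owm).
Qed.

(* Part (i)-(ii) and the converse; the converse does not use the admissibility
   of bt nor the positivity of c. *)
Theorem proposition2 (C : numClosedFieldType) (N : nat) :
  (forall (a : nat -> C) (z : 'I_N.+1 -> C) (w : 'I_N.+1 -> C),
     popuc_params N a ->
     simple_zeros N (Phi a N.+1) z ->
     orth_weights N a z w ->
     [/\ popuc_params N (mirror N a),
         Phi (mirror N a) N.+1 = Phi a N.+1,
         exists wt : 'I_N.+1 -> C, orth_weights N (mirror N a) z wt
       & forall wt : 'I_N.+1 -> C, orth_weights N (mirror N a) z wt ->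
           forall s, wt s * w s
             = hnorm a N / `|((Phi a N.+1)^`()).[z s]| ^+ 2]) /\
  (forall (b bt : nat -> C) (z : 'I_N.+1 -> C) (w wt : 'I_N.+1 -> C) (c : C),
     popuc_params N b -> popuc_params N bt ->
     simple_zeros N (Phi b N.+1) z -> simple_zeros N (Phi bt N.+1) z ->
     orth_weights N b z w -> orth_weights N bt z wt ->
     0 < c ->
     (forall s, wt s * w s = c / `|((Phi b N.+1)^`()).[z s]| ^+ 2) ->
     forall n, (n <= N)%N -> bt n = mirror N b n).
Proof.
split=> [a z w pa sz ow | b bt z w wt c pb _ szb szbt ow owt _ wtw].
  split.
  - exact: mirror_popuc.
  - exact: Phi_mirror.
  - exists (christoffel (mirror N a) z).
    exact: christoffel_orth_weights (mirror_popuc pa) (mirror_simple_zeros pa sz).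
  - by move=> wt owt; apply: product_formula.
exact: mirror_converse pb szb szbt ow owt wtw.
Qed.
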